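(* Assume Hypothesis 1 (stated in the context). Suppose further that $C\ne C_{\max}$, let $n$ be the integer with $|C|=n|C_{\max}|$, and let $\langle C\rangle$ be the $\mathbb F_2$-span of the codewords of $C$. Then: 1. $\mathrm{Aut}(C)\le\mathrm{Aut}(\langle C\rangle)$; 2. $\langle C\rangle$ is completely transitive; 3. the codimension of $C_{\max}$ in $\langle C\rangle$ is at least $2$ and at most $n-1$.
   Context: $H(m,2)$: vertex set $\mathbb F_2^m$, coordinates indexed by a set $M$, $|M|=m$; $d$ Hamming distance. For a code $C$: minimum distance $\delta$, covering radius $\rho=\max_\alpha d(\alpha,C)$, $C_i=\{\alpha:d(\alpha,C)=i\}$. $\mathrm{Aut}(H(m,2))=B\rtimes L$, $B\cong\mathbb Z_2^m$ translations, $L\cong\mathrm{Sym}(M)$; $\mathrm{Aut}(C)$ is the setwise stabiliser of $C$. $C$ is completely transitive if $\mathrm{Aut}(C)$ is transitive on each of $C,C_1,\dots,C_\rho$. For a linear code $D$, $T_D$ is the group of translations by elements of $D$. For $C\ni\mathbf 0$, the maximal linear subcode $C_{\max}$ is the largest linear subcode $D\subseteq C$ with $T_D\le\mathrm{Aut}(C)$. Hypothesis 1: $C$ is a completely transitive code in $H(m,2)$ with $\mathbf 0\in C$ and minimum distance $\delta\ge5$; $X=\mathrm{Aut}(C)$; $C_{\max}$ is the maximal linear subcode with minimum distance $\delta_{\max}$; $X_{\max}$ is the setwise stabiliser of $C_{\max}$ in $X$; $2\le\dim C_{\max}\le m-2$. *)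

(* Binary Hamming scheme H(m,2) with vertex set 'rV['F_2]_m. *)
From HB Require Import structures.
From mathcomp Require Import all_boot all_order all_algebra all_fingroup.
Set Implicit Arguments. Unset Strict Implicit. Unset Printing Implicit Defensive.
Import GRing.Theory.
Local Open Scope ring_scope.

Section Hamming.
Variable m : nat.
Notation vec := 'rV['F_2]_m.
Notation code := {set vec}.

Definition hdist (x y : vec) : nat := #|[set i : 'I_m | x 0 i != y 0 i]|.

(* distance from a vertex to a code (m is an upper bound, used only for C empty) *)
Definition dist_code (x : vec) (C : code) : nat :=
  \big[minn/m]_(c in C) hdist x c.

Definition cov_radius (C : code) : nat := \max_(x : vec) dist_code x C.

Definition dist_class (C : code) (i : nat) : code := [set x | dist_code x C == i].

(* Aut(H(m,2)) = B x| L : pairs (sigma, b) acting by x |-> (x permuted by sigma) + b *)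
Definition haut := ({perm 'I_m} * vec)%type.
Definition hact (g : haut) (x : vec) : vec := col_perm g.1 x + g.2.

Definition CAut (C : code) : {set haut} := [set g | hact g @: C == C].

Definition transl (d : vec) : haut := (1%g, d).

Definition completely_transitive (C : code) : Prop :=
  forall i, (i <= cov_radius C)%N ->
    forall x y, x \in dist_class C i -> y \in dist_class C i ->
      exists2 g, g \in CAut C & hact g x = y.

Definition span_mx (C : code) := (\sum_(c in C) <<c>>)%MS.
Definition cspan (C : code) : code := [set x | (x <= span_mx C)%MS].

Definition linear_code (D : code) : Prop := cspan D = D.
Definition dim_code (D : code) : nat := \rank (span_mx D).

Definition transl_subcode (C D : code) : Prop :=
  [/\ linear_code D, D \subset C & forall d, d \in D -> transl d \in CAut C].

Definition is_Cmax (C D : code) : Prop :=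
  transl_subcode C D /\ forall D', transl_subcode C D' -> D' \subset D.

End Hamming.

From mathcomp Require Import all_boot all_order all_algebra all_fingroup zify.
Set Implicit Arguments. Unset Strict Implicit. Unset Printing Implicit Defensive.
Import Order.TTheory GRing.Theory.
Local Open Scope ring_scope.

(* Since 0 lies in C, the translation part of any g in Aut(C) lies in C, so the
   coordinate permutation of g maps C into <C> and therefore preserves <C>.
   If d in <C> is nearest to x, then d(x + d, C) = d(x, <C>): translations by <C>
   carry each distance class of <C> into the class of C of the same index, where
   Aut(C) is transitive, so <C> is completely transitive.  Finally C is a union
   of n cosets of C_max, one of them C_max itself, so <C> is spanned by C_max and
   n - 1 coset representatives; and if <C> had codimension at most 1 over C_max,
   then <C> = C_max + {0, c} would lie in C, making C a linear subcode whose
   translations fix C, so C = C_max by maximality. *)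

Lemma F2_cases (a : 'F_2) : a = 0 \/ a = 1.
Proof. by case: a => [[|[|//]]] ?; [left | right]; apply: val_inj. Qed.

Lemma oppr_F2 (V : lmodType 'F_2) (x : V) : - x = x.
Proof.
have N1E : -1 = 1 :> 'F_2 by apply: val_inj.
by rewrite -scaleN1r N1E scale1r.
Qed.

Lemma addrr_F2 (V : lmodType 'F_2) (x : V) : x + x = 0.
Proof. by rewrite -{2}[x]oppr_F2 subrr. Qed.

Lemma addrK_F2 (V : lmodType 'F_2) (x y : V) : x + y + y = x.
Proof. by rewrite -{2}[y]oppr_F2 addrK. Qed.

Section HammingSpace.

Variable m : nat.
Implicit Types (x y c d : 'rV['F_2]_m) (C D K : {set 'rV['F_2]_m}).

Lemma hdist_le x y : (hdist x y <= m)%N.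
Proof. by rewrite -[m in (_ <= m)%N]card_ord max_card. Qed.

Lemma hdistDr x y d : hdist (x + d) (y + d) = hdist x y.
Proof. by apply: eq_card => i; rewrite !inE !mxE (inj_eq (addIr _)). Qed.

Lemma dist_code_le C x c : c \in C -> (dist_code x C <= hdist x c)%N.
Proof. exact: (@bigmin_le_cond _ nat _ m c (mem C) (hdist x)). Qed.

Lemma dist_code_attained C x c0 : c0 \in C ->
  exists2 c, c \in C & dist_code x C = hdist x c.
Proof.
move=> Cc0; have [c Cc E] := @eq_bigmin _ nat _ m c0 (mem C) (hdist x) Cc0
  (fun c _ => hdist_le x c).
by exists c; last exact: E.
Qed.

Lemma dist_code_le_cov_radius C x : (dist_code x C <= cov_radius C)%N.
Proof. exact: (leq_bigmax (F := fun z => dist_code z C)). Qed.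

Lemma sub_span_mx C c : c \in C -> (c <= span_mx C)%MS.
Proof. by move=> Cc; apply: (sumsmx_sup c) => //; rewrite genmxE. Qed.

Lemma span_mx_subP C k (M : 'M_(k, m)) :
  reflect (forall c, c \in C -> (c <= M)%MS) (span_mx C <= M)%MS.
Proof.
apply: (iffP idP) => [CM c Cc | CM].
  exact: submx_trans (sub_span_mx Cc) CM.
by apply/sumsmx_subP => c Cc; rewrite genmxE CM.
Qed.

Lemma mem_cspan C c : c \in C -> c \in cspan C.
Proof. by move=> Cc; rewrite inE sub_span_mx. Qed.

Lemma cspan0 C : 0 \in cspan C.
Proof. by rewrite inE sub0mx. Qed.

Lemma cspanD C x y : x \in cspan C -> y \in cspan C -> x + y \in cspan C.
Proof. by rewrite !inE; apply: addmx_sub. Qed.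

Lemma span_mx_cspan C : (span_mx (cspan C) :=: span_mx C)%MS.
Proof.
apply/eqmxP/andP; split; apply/span_mx_subP => c; first by rewrite inE.
by move/mem_cspan/sub_span_mx.
Qed.

Lemma dim_cspan C : dim_code (cspan C) = dim_code C.
Proof. by rewrite /dim_code span_mx_cspan. Qed.

Lemma linear_cspan C : linear_code (cspan C).
Proof. by apply/setP => x; rewrite !inE span_mx_cspan. Qed.

Lemma dim_code_le_card D : (dim_code D <= #|D|)%N.
Proof.
apply: leq_trans (mxrank_sum_leqif _) _; rewrite -sum1_card leq_sum // => d _.
by rewrite /= mxrank_gen rank_leq_row.
Qed.

Lemma mem_linear_code K x : linear_code K -> (x \in K) = (x <= span_mx K)%MS.
Proof. by move=> linK; rewrite -{1}linK inE. Qed.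

Lemma linear_code0 K : linear_code K -> 0 \in K.
Proof. by move=> linK; rewrite -linK cspan0. Qed.

Lemma linear_codeD K x y : linear_code K -> x \in K -> y \in K -> x + y \in K.
Proof. by move=> linK; rewrite -linK; apply: cspanD. Qed.

Implicit Types (g h : haut m) (s : {perm 'I_m}).

Definition hcomp g h : haut m := (g.1 * h.1, col_perm g.1 h.2 + g.2)%g.

Lemma hactM g h x : hact (hcomp g h) x = hact g (hact h x).
Proof. by rewrite /hact /= col_permM addrA !col_permE mulmxDl. Qed.

Lemma hact_transl d x : hact (transl d) x = x + d.
Proof. by rewrite /hact col_perm1. Qed.

Lemma hact_inj g : injective (hact g).
Proof.
move=> x y /addIr /(congr1 (col_perm g.1^-1)).
by rewrite -!col_permM mulVg !col_perm1.
Qed.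

Lemma mem_CAut D g : hact g @: D \subset D -> g \in CAut D.
Proof.
by move=> gD; rewrite inE eqEcard gD (card_imset _ (@hact_inj g)) leqnn.
Qed.

Lemma hact_CAut D g x : g \in CAut D -> x \in D -> hact g x \in D.
Proof. by rewrite inE => /eqP {2}<- Dx; apply: imset_f. Qed.

Lemma hcomp_CAut D g h : g \in CAut D -> h \in CAut D -> hcomp g h \in CAut D.
Proof.
move=> Dg Dh; apply/mem_CAut/subsetP => _ /imsetP[x Dx ->].
by rewrite hactM !hact_CAut.
Qed.

Lemma transl_CAut_linear D d : linear_code D -> d \in D -> transl d \in CAut D.
Proof.
move=> linD Dd; apply/mem_CAut/subsetP => _ /imsetP[x Dx ->].
by rewrite hact_transl linear_codeD.
Qed.

Lemma CAut_shift C g : 0 \in C -> g \in CAut C -> g.2 \in C.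
Proof.
by move=> C0 Cg; have := hact_CAut Cg C0; rewrite /hact col_permE mul0mx add0r.
Qed.

Lemma cspan_col_perm C s :
  {in C, forall c, col_perm s c \in cspan C} ->
  {in cspan C, forall x, col_perm s x \in cspan C}.
Proof.
move=> sC x; rewrite !inE col_permE => Sx; apply: submx_trans (submxMr _ Sx) _.
rewrite sumsmxMr; apply/sumsmx_subP => c Cc.
by rewrite (eqmxMr _ (genmxE c)); move: (sC c Cc); rewrite inE col_permE.
Qed.

Lemma CAut_sub_cspan C : 0 \in C -> CAut C \subset CAut (cspan C).
Proof.
move=> C0; apply/subsetP => g Cg; apply/mem_CAut/subsetP => _ /imsetP[x Sx ->].
have g2C := CAut_shift C0 Cg.
rewrite cspanD ?(mem_cspan g2C) //; apply: cspan_col_perm Sx => c Cc.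
by rewrite -(addrK_F2 (col_perm g.1 c) g.2) cspanD ?mem_cspan ?(hact_CAut Cg).
Qed.

Lemma dist_code_cspan C x : 0 \in C ->
  exists2 d, d \in cspan C & dist_code (x + d) C = dist_code x (cspan C).
Proof.
move=> C0; have [d Sd xd] := dist_code_attained x (cspan0 C).
exists d => //; apply/eqP; rewrite eqn_leq; apply/andP; split.
  by apply: leq_trans (dist_code_le _ C0) _; rewrite xd -(hdistDr x d d) addrr_F2.
have [c Cc ->] := dist_code_attained (x + d) C0.
by rewrite -(hdistDr _ _ d) addrK_F2 dist_code_le // cspanD // mem_cspan.
Qed.

Lemma completely_transitive_cspan C :
  0 \in C -> completely_transitive C -> completely_transitive (cspan C).
Proof.
move=> C0 CT i _ x y; rewrite !inE => /eqP dx /eqP dy.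
have [d Sd dxd] := dist_code_cspan x C0.
have [e Se dye] := dist_code_cspan y C0.
have [g Cg gxy] : exists2 g, g \in CAut C & hact g (x + d) = y + e.
  apply: (CT i); rewrite ?inE ?dxd ?dye ?dx ?dy //.
  by rewrite -dx -dxd dist_code_le_cov_radius.
exists (hcomp (transl e) (hcomp g (transl d))).
  have transl_S z : z \in cspan C -> transl z \in CAut (cspan C).
    exact: transl_CAut_linear (linear_cspan C).
  by rewrite !hcomp_CAut ?transl_S // (subsetP (CAut_sub_cspan C0)).
by rewrite !hactM !hact_transl gxy addrK_F2.
Qed.

End HammingSpace.

Section Cosets.

Variables (m : nat) (K C : {set 'rV['F_2]_m}).
Hypothesis linK : linear_code K.
Hypothesis addCK : forall c k, c \in C -> k \in K -> c + k \in C.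
Implicit Types (x c : 'rV['F_2]_m).

(* As K is linear, y = c is always a candidate, so the default c is never used. *)
Definition coset_rep c := odflt c [pick y | y + c \in K].

Lemma coset_repP c : coset_rep c + c \in K.
Proof.
rewrite /coset_rep; case: pickP => [y //|_] /=.
by rewrite addrr_F2 linear_code0.
Qed.

Lemma coset_rep_eq c c' : c + c' \in K -> coset_rep c = coset_rep c'.
Proof.
move=> cc'K; rewrite /coset_rep (@eq_pick _ _ (fun y => y + c' \in K)) => [|y /=].
  by case: pickP => [//|/(_ c')]; rewrite /= addrr_F2 linear_code0.
apply/idP/idP => yK.
  by rewrite -(addrK_F2 y c) -addrA linear_codeD.
by rewrite -(addrK_F2 y c') -addrA (addrC c') linear_codeD.
Qed.

Lemma coset_rep_idem c : coset_rep (coset_rep c) = coset_rep c.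
Proof. exact/coset_rep_eq/coset_repP. Qed.

Lemma mem_coset_rep c : c \in C -> coset_rep c \in C.
Proof.
by move=> Cc; rewrite -(addrK_F2 (coset_rep c) c) addrC addCK ?coset_repP.
Qed.

Lemma card_coset_reps : #|C| = (#|coset_rep @: C| * #|K|)%N.
Proof.
rewrite -sum_nat_const -sum1_card (partition_big coset_rep (mem (coset_rep @: C))) /=;
  last by move=> c Cc; apply: imset_f.
apply: eq_bigr => _ /imsetP[c0 Cc0 ->].
rewrite sum1_card -(card_preimset K (addIr (coset_rep c0))); apply: eq_card => c.
rewrite !inE; apply/andP/idP => [[Cc /eqP <-]|c0K].
  by rewrite addrC coset_repP.
split; first by rewrite -(addrK_F2 c (coset_rep c0)) addrC addCK ?mem_coset_rep.
by rewrite (coset_rep_eq c0K) coset_rep_idem.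
Qed.

Lemma dim_code_coset_reps : 0 \in C ->
  (dim_code C <= dim_code K + (#|coset_rep @: C| - 1))%N.
Proof.
move=> C0; set T := coset_rep @: C; set t0 := coset_rep 0.
have t0T : t0 \in T by apply: imset_f.
have t0K : t0 \in K by have := coset_repP 0; rewrite addr0.
have spanC : (span_mx C <= span_mx K + span_mx (T :\ t0))%MS.
  apply/span_mx_subP => c Cc; rewrite -(addrK_F2 c (coset_rep c)) addmx_sub //.
    by rewrite (submx_trans _ (addsmxSl _ _)) // -mem_linear_code // addrC coset_repP.
  have [-> | rep_t0] := eqVneq (coset_rep c) t0.
    by rewrite (submx_trans _ (addsmxSl _ _)) // -mem_linear_code.
  by rewrite (submx_trans _ (addsmxSr _ _)) // sub_span_mx // !inE rep_t0 imset_f.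
apply: leq_trans (mxrankS spanC) _; apply: leq_trans (mxrank_adds_leqif _ _) _.
rewrite leq_add2l (leq_trans (dim_code_le_card _)) //.
by rewrite (cardsD1 t0 T) t0T add1n subn1.
Qed.

Lemma dim_code_le_index n : 0 \in C -> #|C| = (n * #|K|)%N ->
  (dim_code C <= dim_code K + (n - 1))%N.
Proof.
move=> C0 Cn; have K_gt0 : (0 < #|K|)%N.
  by apply/card_gt0P; exists 0; apply: linear_code0.
suff -> : n = #|coset_rep @: C| by apply: dim_code_coset_reps.
by apply/eqP; rewrite -(eqn_pmul2r K_gt0) -Cn card_coset_reps.
Qed.

Lemma linear_code_of_dim_le : K \subset C ->
  (dim_code C <= dim_code K + 1)%N -> linear_code C.
Proof.
move=> KC dimC; have [CK | /subsetPn[c Cc cNK]] := boolP (C \subset K).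
  by have -> : C = K by apply/eqP; rewrite eqEsubset CK KC.
have KcC : (span_mx K + c <= span_mx C)%MS.
  rewrite addsmx_sub sub_span_mx // andbT.
  by apply/span_mx_subP => k /(subsetP KC)/sub_span_mx.
have CKc : (span_mx C <= span_mx K + c)%MS.
  rewrite -(geq_leqif (mxrank_leqif_sup KcC)) (leq_trans dimC) // addn1 rank_ltmx //.
  by rewrite ltmxE addsmxSl addsmx_sub submx_refl -mem_linear_code.
apply/setP => x; apply/idP/idP => [|/mem_cspan //].
rewrite inE => /submx_trans/(_ CKc)/sub_addsmxP[[u v] /= ->].
have uK : u *m span_mx K \in K by rewrite mem_linear_code // submxMl.
have /sub_rVP[a ->] : (v *m c <= c)%MS by apply: submxMl.
have [-> | ->] := F2_cases a; first by rewrite scale0r addr0 (subsetP KC).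
by rewrite scale1r addrC addCK.
Qed.

End Cosets.

Lemma transl_subcode_addr m (C K : {set 'rV['F_2]_m}) c k :
  transl_subcode C K -> c \in C -> k \in K -> c + k \in C.
Proof. by case=> _ _ trK Cc Kk; rewrite -hact_transl hact_CAut ?trK. Qed.

Lemma Cmax_dim_gap m (C K : {set 'rV['F_2]_m}) :
  is_Cmax C K -> C != K -> (dim_code K + 2 <= dim_code C)%N.
Proof.
move=> [trK maxK] CneK; have [linK KC _] := trK.
rewrite leqNgt addn2 ltnS; apply: contra CneK => dimC.
have addCK c k := @transl_subcode_addr m C K c k trK.
have linC : linear_code C.
  by apply: (linear_code_of_dim_le linK addCK KC); rewrite addn1.
have CK : C \subset K by apply: maxK; split => // d; apply: transl_CAut_linear.
by rewrite eqEsubset CK KC.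
Qed.

Theorem lemma2p10 (m : nat) (C Cmax : {set 'rV['F_2]_m}) (n : nat) :
  (* Hypothesis 1 *)
  completely_transitive C ->
  (0%R : 'rV['F_2]_m) \in C ->
  (forall x y, x \in C -> y \in C -> x != y -> (5 <= hdist x y)%N) ->
  is_Cmax C Cmax ->
  (2 <= dim_code Cmax <= m - 2)%N ->
  (* further assumptions *)
  C != Cmax ->
  #|C| = (n * #|Cmax|)%N ->
  [/\ CAut C \subset CAut (cspan C),
      completely_transitive (cspan C) &
      (2 <= dim_code (cspan C) - dim_code Cmax <= n - 1)%N].
Proof.
move=> CT C0 _ Cmax_C _ CneCmax Cn.
have [trCmax _] := Cmax_C; have [linCmax _ _] := trCmax.
have gap := Cmax_dim_gap Cmax_C CneCmax.
have addCCmax c k := @transl_subcode_addr m C Cmax c k trCmax.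
have index := dim_code_le_index linCmax addCCmax C0 Cn.
split; [exact: CAut_sub_cspan | exact: completely_transitive_cspan |].
rewrite dim_cspan; lia.
Qed.
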